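(* Let $B$ be a finite Blaschke product of degree $n=p_1p_2\cdots p_m$ (with integers $p_i\ge 2$) having exactly one critical value. Then for every permutation $\sigma$ of $\{1,\dots,m\}$ there exist finite Blaschke products $B_1,\dots,B_m$ with $\deg B_j=p_{\sigma(j)}$ such that $B=B_1\circ B_2\circ\cdots\circ B_m$.
   Context: A finite Blaschke product of degree $d$ is $B(z)=\gamma\prod_{j=1}^d \frac{z-a_j}{1-\overline{a_j}z}$ with $a_j\in\mathbb{D}$ and $|\gamma|=1$. The set of critical values of $B$ is $\{w\in\mathbb{D}: w=B(z)\text{ for some } z\in\mathbb{D} \text{ with } B'(z)=0\}$. *)

From Stdlib Require Export Reals List.
From Coquelicot Require Export Coquelicot.

Open Scope R_scope.

Definition in_disk (z : C) : Prop := Cmod z < 1.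

Definition blaschke_factor (a z : C) : C := ((z - a) / (1 - Cconj a * z))%C.

Definition blaschke_formula (gamma : C) (a : list C) (z : C) : C :=
  (gamma * fold_right (fun aj acc => blaschke_factor aj z * acc) (RtoC 1) a)%C.

(* B is a finite Blaschke product of degree d: on the unit disk it is given by
   the formula with d zeros a_1..a_d (with multiplicity) in the disk and a
   unimodular constant gamma. (B is considered as a function on the disk;
   its values outside the disk are irrelevant.) *)
Definition is_FBP (d : nat) (B : C -> C) : Prop :=
  exists (gamma : C) (a : list C),
    Cmod gamma = 1 /\ length a = d /\ List.Forall in_disk a /\
    forall z, in_disk z -> B z = blaschke_formula gamma a z.

Definition is_critical_point (B : C -> C) (z : C) : Prop :=
  @is_derive C_AbsRing C_NormedModule B z (RtoC 0).

Definition critical_value (B : C -> C) (w : C) : Prop :=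
  in_disk w /\ exists z, in_disk z /\ is_critical_point B z /\ w = B z.

Definition compose_list (Bs : nat -> C -> C) (m : nat) : C -> C :=
  fold_right (fun j acc => fun z => Bs j (acc z)) (fun z => z) (seq 0 m).

Definition prod_upto (p : nat -> nat) (m : nat) : nat :=
  fold_right (fun j acc => (p j * acc)%nat) 1%nat (seq 0 m).

Definition is_perm (m : nat) (sigma : nat -> nat) : Prop :=
  (forall i, (i < m)%nat -> (sigma i < m)%nat) /\
  (forall i j, (i < m)%nat -> (j < m)%nat -> sigma i = sigma j -> i = j).

(** Compose [B] with the disk automorphism sending its critical value [w] to
    [0]. The result is again a Blaschke product [F] of degree [n]: the
    numerator [g * prod (z - a_j) - w * prod (1 - conj a_j * z)] is a polynomial
    of exact degree [n] all of whose roots lie in the disk.  If [F] had two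
    distinct zeros, clearing denominators in its logarithmic derivative would
    give a nonconstant polynomial that vanishes neither on the unit circle nor
    at the zeros of [F] and is symmetric under [z |-> 1 / conj z]; a root of it
    in the disk is a critical point [r] of [F] with [F r <> 0], so [B r] would
    be a second critical value.  Hence [F = g * phi_c ^ n] for one Blaschke
    factor [phi_c], and [B] is the composition of [phi_(-w)] with [g * z ^ k],
    pure powers, and [phi_c ^ k'] in any order of the exponents. *)

From Stdlib Require Import Lia Lra Permutation Classical.
From mathcomp Require all_boot all_algebra Rstruct.
From mathcomp.real_closed Require complex.

Lemma Cmult_integral (x y : C) : (x * y)%C = RtoC 0 -> x = RtoC 0 \/ y = RtoC 0.
Proof.
  intros H. apply (f_equal Cmod) in H. rewrite Cmod_mult, Cmod_0 in H.
  destruct (Rmult_integral _ _ H); [left | right]; apply Cmod_eq_0; assumption.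
Qed.

Lemma Cminus_eq0 (z x : C) : (z - x)%C = RtoC 0 -> z = x.
Proof. intros E. replace z with ((z - x) + x)%C by ring. rewrite E. ring. Qed.

Lemma Cconj_RtoC (r : R) : Cconj (RtoC r) = RtoC r.
Proof. unfold Cconj, RtoC. simpl. rewrite Ropp_0. reflexivity. Qed.

Lemma Cconj_neq0 (z : C) : z <> RtoC 0 -> Cconj z <> RtoC 0.
Proof. intros Hz E. apply Hz. rewrite <- (Cconj_conj z), E. apply Cconj_RtoC. Qed.

Lemma Cinv_neq0 (z : C) : z <> RtoC 0 -> (/ z)%C <> RtoC 0.
Proof.
  intros Hz E. apply (f_equal (Cmult z)) in E. rewrite Cinv_r, Cmult_0_r in E by exact Hz.
  apply (f_equal fst) in E. simpl in E. lra.
Qed.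

Lemma Cmod_sqr (z : C) : Cmod z ^ 2 = fst z ^ 2 + snd z ^ 2.
Proof. unfold Cmod. rewrite pow2_sqrt; [reflexivity | nra]. Qed.

Lemma Cmod_lt_of_sqr (u v : C) : Cmod u ^ 2 < Cmod v ^ 2 -> Cmod u < Cmod v.
Proof. intros H. pose proof (Cmod_ge_0 u). pose proof (Cmod_ge_0 v). nra. Qed.

Lemma Cmod_le_of_sqr (u v : C) : Cmod u ^ 2 <= Cmod v ^ 2 -> Cmod u <= Cmod v.
Proof. intros H. pose proof (Cmod_ge_0 u). pose proof (Cmod_ge_0 v). nra. Qed.

Lemma Cmod_minus_ge (y z : C) : Cmod z - Cmod (y - z) <= Cmod y.
Proof.
  pose proof (Cmod_triangle y (- (y - z))%C) as H.
  replace (y + - (y - z))%C with z in H by ring. rewrite Cmod_opp in H. lra.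
Qed.

Lemma Cmod1_mul_conj (g : C) : Cmod g = 1 -> (g * Cconj g)%C = RtoC 1.
Proof. intros H. rewrite <- Cmod2_conj, H. unfold RtoC. f_equal; simpl; ring. Qed.

(** * Complex derivatives *)

Notation is_C_derive f z l := (@is_derive C_AbsRing C_NormedModule f z l).

(* Coquelicot's product and chain rules are stated for the scalar ring seen
   as a normed module over itself, which differs from [C_NormedModule]
   only in the proof of linearity. *)
Lemma is_C_derive_of_AbsRing (f : C -> C) (z l : C) :
  @is_derive C_AbsRing (AbsRing_NormedModule C_AbsRing) f z l -> is_C_derive f z l.
Proof. intros [_ H]. split; [apply is_linear_scal_l | exact H]. Qed.

Lemma is_C_derive_to_AbsRing (f : C -> C) (z l : C) :
  is_C_derive f z l -> @is_derive C_AbsRing (AbsRing_NormedModule C_AbsRing) f z l.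
Proof. intros [_ H]. split; [apply is_linear_scal_l | exact H]. Qed.

Lemma is_C_derive_eq (f : C -> C) (z l l' : C) :
  is_C_derive f z l -> l = l' -> is_C_derive f z l'.
Proof. intros H <-. exact H. Qed.

Lemma is_C_derive_const (c z : C) : is_C_derive (fun _ => c) z (RtoC 0).
Proof. apply (@is_derive_const C_AbsRing C_NormedModule). Qed.

Lemma is_C_derive_id (z : C) : is_C_derive (fun t => t) z (RtoC 1).
Proof. apply is_C_derive_of_AbsRing, (@is_derive_id C_AbsRing). Qed.

Lemma is_C_derive_plus (f g : C -> C) (z df dg : C) :
  is_C_derive f z df -> is_C_derive g z dg -> is_C_derive (fun t => f t + g t)%C z (df + dg)%C.
Proof. apply (@is_derive_plus C_AbsRing C_NormedModule). Qed.

Lemma is_C_derive_minus (f g : C -> C) (z df dg : C) :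
  is_C_derive f z df -> is_C_derive g z dg -> is_C_derive (fun t => f t - g t)%C z (df - dg)%C.
Proof.
  intros Hf Hg. apply is_C_derive_plus; [exact Hf|].
  apply (@is_derive_opp C_AbsRing C_NormedModule), Hg.
Qed.

Lemma is_C_derive_mult (f g : C -> C) (z df dg : C) :
  is_C_derive f z df -> is_C_derive g z dg ->
  is_C_derive (fun t => f t * g t)%C z (df * g z + f z * dg)%C.
Proof.
  intros Hf Hg. apply is_C_derive_of_AbsRing, (@is_derive_mult C_AbsRing);
    [apply is_C_derive_to_AbsRing, Hf | apply is_C_derive_to_AbsRing, Hg |
     intros; apply Cmult_comm].
Qed.

Lemma is_C_derive_comp (f g : C -> C) (z df dg : C) :
  is_C_derive f (g z) df -> is_C_derive g z dg -> is_C_derive (fun t => f (g t)) z (dg * df)%C.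
Proof.
  intros Hf Hg. apply (@is_derive_comp C_AbsRing C_NormedModule); [exact Hf|].
  apply is_C_derive_to_AbsRing, Hg.
Qed.

(* The remainder is [(y - z)^2 / (z^2 y)], and [|y| > |z|/2] once [|y - z| < |z|/2]. *)
Lemma is_C_derive_Cinv (z : C) : z <> RtoC 0 -> is_C_derive Cinv z (- / (z * z))%C.
Proof.
  intros Hz. split; [apply is_linear_scal_l|].
  intros x Hx. apply (@is_filter_lim_locally_unique C_AbsRing
                        (AbsRing_NormedModule C_AbsRing)) in Hx. subst x.
  intros eps.
  assert (Hm : 0 < Cmod z) by (apply Cmod_gt_0; exact Hz).
  set (delta := Rmin (Cmod z / 2) (eps * Cmod z ^ 3 / 2)).
  assert (Hdelta : 0 < delta).
  { apply Rmin_glb_lt; [lra|]. pose proof (cond_pos eps). pose proof (pow_lt _ 3 Hm). nra. }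
  exists (mkposreal _ Hdelta). intros y Hy.
  change (Cmod (y - z)%C < delta) in Hy.
  set (d := Cmod (y - z)%C) in *.
  assert (Hd0 : 0 <= d) by apply Cmod_ge_0.
  assert (H1 : d < Cmod z / 2) by (eapply Rlt_le_trans; [exact Hy | apply Rmin_l]).
  assert (H2 : d < eps * Cmod z ^ 3 / 2) by (eapply Rlt_le_trans; [exact Hy | apply Rmin_r]).
  assert (Hy0 : Cmod z / 2 < Cmod y) by (pose proof (Cmod_minus_ge y z); unfold d in *; lra).
  assert (Hyn : (y : C) <> RtoC 0) by (intro E; rewrite E, Cmod_0 in Hy0; lra).
  change (Cmod ((/ y - / z) - (y - z) * (- / (z * z)))%C <= eps * d).
  replace ((/ y - / z) - (y - z) * (- / (z * z)))%C
    with ((y - z) * (y - z) / (z * z * y))%C by (field; auto).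
  unfold Cdiv. rewrite !Cmod_mult, Cmod_inv, !Cmod_mult by (repeat apply Cmult_neq_0; auto).
  fold d.
  assert (Hpos : 0 < Cmod z * Cmod z * (Cmod z / 2)) by (repeat apply Rmult_lt_0_compat; lra).
  apply Rle_trans with (d * d * / (Cmod z * Cmod z * (Cmod z / 2))).
  { apply Rmult_le_compat_l; [nra|]. apply Rinv_le_contravar; [exact Hpos|].
    apply Rmult_le_compat_l; nra. }
  apply Rle_trans with (d * (eps * Cmod z ^ 3 / 2) * / (Cmod z * Cmod z * (Cmod z / 2))).
  { apply Rmult_le_compat_r; [left; apply Rinv_0_lt_compat, Hpos | nra]. }
  right. field. lra.
Qed.

Lemma is_C_derive_div (f g : C -> C) (z df dg : C) :
  is_C_derive f z df -> is_C_derive g z dg -> g z <> RtoC 0 ->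
  is_C_derive (fun t => f t / g t)%C z ((df * g z - f z * dg) / (g z * g z))%C.
Proof.
  intros Hf Hg Hgz. eapply is_C_derive_eq.
  - apply is_C_derive_mult; [exact Hf|].
    apply (is_C_derive_comp Cinv g); [apply is_C_derive_Cinv, Hgz | exact Hg].
  - cbv beta. field. exact Hgz.
Qed.

(** * Blaschke factors *)

Lemma Cmod_blaschke_identity (a z : C) :
  Cmod (1 - Cconj a * z)%C ^ 2 - Cmod (z - a)%C ^ 2 = (1 - Cmod a ^ 2) * (1 - Cmod z ^ 2).
Proof. rewrite !Cmod_sqr. destruct a as [a1 a2], z as [z1 z2]. simpl. ring. Qed.

Lemma in_disk_0 : in_disk (RtoC 0).
Proof. unfold in_disk. rewrite Cmod_0. lra. Qed.

Lemma in_disk_opp (w : C) : in_disk w -> in_disk (- w)%C.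
Proof. unfold in_disk. rewrite Cmod_opp. auto. Qed.

Lemma one_sub_Cmod_sqr_pos (a : C) : in_disk a -> 0 < 1 - Cmod a ^ 2.
Proof. unfold in_disk. intros Ha. pose proof (Cmod_ge_0 a). nra. Qed.

Lemma in_disk_locally (r : C) : in_disk r -> @locally (AbsRing_UniformSpace C_AbsRing) r in_disk.
Proof.
  intros Hr. assert (Hp : 0 < 1 - Cmod r) by (unfold in_disk in Hr; lra).
  exists (mkposreal _ Hp). intros y Hy. change C in y.
  change (Cmod (y - r)%C < 1 - Cmod r) in Hy.
  pose proof (Cmod_triangle r (y - r)%C) as H.
  replace (r + (y - r))%C with y in H by ring.
  unfold in_disk. lra.
Qed.

Lemma is_C_derive_ext_disk (f g : C -> C) (z l : C) :
  in_disk z -> (forall t, in_disk t -> f t = g t) -> is_C_derive f z l -> is_C_derive g z l.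
Proof.
  intros Hz Hfg Hf. apply (@is_derive_ext_loc C_AbsRing C_NormedModule f); [|exact Hf].
  destruct (in_disk_locally z Hz) as [eps Heps]. exists eps. intros y Hy. apply Hfg, Heps, Hy.
Qed.

Lemma blaschke_denom_neq0 (a z : C) : in_disk a -> in_disk z -> (1 - Cconj a * z)%C <> RtoC 0.
Proof.
  intros Ha Hz E. pose proof (Cmod_blaschke_identity a z) as Id.
  rewrite E, Cmod_0 in Id.
  pose proof (one_sub_Cmod_sqr_pos a Ha). pose proof (one_sub_Cmod_sqr_pos z Hz).
  pose proof (pow2_ge_0 (Cmod (z - a)%C)). nra.
Qed.

Lemma blaschke_factor_in_disk (a z : C) : in_disk a -> in_disk z -> in_disk (blaschke_factor a z).
Proof.
  intros Ha Hz. pose proof (blaschke_denom_neq0 a z Ha Hz) as Hn.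
  assert (Hp : 0 < Cmod (1 - Cconj a * z)%C) by (apply Cmod_gt_0, Hn).
  unfold in_disk, blaschke_factor. rewrite Cmod_div by exact Hn.
  apply Rmult_lt_reg_r with (Cmod (1 - Cconj a * z)%C); [exact Hp|].
  unfold Rdiv. rewrite Rmult_assoc, Rinv_l, Rmult_1_r, Rmult_1_l by lra.
  apply Cmod_lt_of_sqr. pose proof (Cmod_blaschke_identity a z).
  pose proof (one_sub_Cmod_sqr_pos a Ha). pose proof (one_sub_Cmod_sqr_pos z Hz). nra.
Qed.

Lemma Cmod_blaschke_denom_le (a s : C) : in_disk a -> 1 <= Cmod s ->
  Cmod (1 - Cconj a * s)%C <= Cmod (s - a)%C.
Proof.
  intros Ha Hs. apply Cmod_le_of_sqr. pose proof (Cmod_blaschke_identity a s).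
  pose proof (one_sub_Cmod_sqr_pos a Ha). assert (1 <= Cmod s ^ 2) by nra.
  assert (0 <= (1 - Cmod a ^ 2) * (Cmod s ^ 2 - 1)) by (apply Rmult_le_pos; lra). nra.
Qed.

Lemma blaschke_factor_0 (u : C) : blaschke_factor (RtoC 0) u = u.
Proof. unfold blaschke_factor. rewrite Cconj_RtoC. field. Qed.

Lemma blaschke_factor_self (w : C) : in_disk w -> blaschke_factor w w = RtoC 0.
Proof.
  intros Hw. pose proof (blaschke_denom_neq0 w w Hw Hw). unfold blaschke_factor. field. auto.
Qed.

Lemma blaschke_factor_opp_K (w v : C) : in_disk w -> in_disk v ->
  blaschke_factor (- w)%C (blaschke_factor w v) = v.
Proof.
  intros Hw Hv.
  pose proof (blaschke_denom_neq0 w v Hw Hv). pose proof (blaschke_denom_neq0 w w Hw Hw).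
  unfold blaschke_factor. rewrite Copp_conj.
  replace (1 - - Cconj w * ((v - w) / (1 - Cconj w * v)))%C
    with ((1 - Cconj w * w) / (1 - Cconj w * v))%C by (field; auto).
  field. auto.
Qed.

Lemma blaschke_factor_eq0 (a z : C) : (1 - Cconj a * z)%C <> RtoC 0 ->
  blaschke_factor a z = RtoC 0 -> z = a.
Proof.
  intros Hn E. unfold blaschke_factor in E.
  replace z with ((z - a) / (1 - Cconj a * z) * (1 - Cconj a * z) + a)%C by (field; auto).
  rewrite E. ring.
Qed.

Lemma is_C_derive_blaschke_factor (a z : C) : (1 - Cconj a * z)%C <> RtoC 0 ->
  is_C_derive (blaschke_factor a) z ((1 - Cconj a * a) / ((1 - Cconj a * z) * (1 - Cconj a * z)))%C.
Proof.
  intros Hn. unfold blaschke_factor. eapply is_C_derive_eq.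
  - apply (is_C_derive_div (fun t => t - a)%C (fun t => 1 - Cconj a * t)%C); [| |exact Hn].
    + apply is_C_derive_minus; [apply is_C_derive_id | apply is_C_derive_const].
    + apply is_C_derive_minus; [apply is_C_derive_const|].
      apply is_C_derive_mult; [apply is_C_derive_const | apply is_C_derive_id].
  - cbv beta. field. exact Hn.
Qed.

Definition prodC (l : list C) : C := fold_right Cmult (RtoC 1) l.

Lemma prodC_eq0 (l : list C) : prodC l = RtoC 0 -> In (RtoC 0) l.
Proof.
  induction l as [|x l IH]; simpl; intros H.
  - apply (f_equal fst) in H. simpl in H. lra.
  - destruct (Cmult_integral _ _ H) as [H1|H1]; [left | right]; auto.
Qed.

Lemma prodC_map_sub_eq0 (bs : list C) (r : C) :
  In r bs -> prodC (map (fun b => r - b)%C bs) = RtoC 0.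
Proof.
  induction bs as [|b bs IH]; simpl; [contradiction|]. intros [->|H].
  - ring.
  - rewrite IH by exact H. ring.
Qed.

Definition blaschke_prod (a : list C) (z : C) : C :=
  fold_right (fun aj acc => (blaschke_factor aj z * acc)%C) (RtoC 1) a.

Definition blaschke_num (a : list C) (z : C) : C := prodC (map (fun x => z - x)%C a).
Definition blaschke_den (a : list C) (z : C) : C := prodC (map (fun x => 1 - Cconj x * z)%C a).

Lemma blaschke_formula_prod (g : C) (a : list C) (z : C) :
  blaschke_formula g a z = (g * blaschke_prod a z)%C.
Proof. reflexivity. Qed.

Lemma blaschke_prod_repeat (c : C) (k : nat) (u : C) :
  blaschke_prod (repeat c k) u = (blaschke_factor c u ^ k)%C.
Proof. induction k as [|k IH]; simpl; [reflexivity | now rewrite IH]. Qed.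

Lemma Cmod_blaschke_prod_le1 (a : list C) (z : C) : List.Forall in_disk a -> in_disk z ->
  Cmod (blaschke_prod a z) <= 1.
Proof.
  intros Ha Hz. induction Ha as [|x a Hx Ha IH]; simpl.
  - rewrite Cmod_1. lra.
  - rewrite Cmod_mult. pose proof (blaschke_factor_in_disk x z Hx Hz). unfold in_disk in *.
    pose proof (Cmod_ge_0 (blaschke_factor x z)). pose proof (Cmod_ge_0 (blaschke_prod a z)). nra.
Qed.

Lemma blaschke_formula_in_disk (g : C) (a : list C) (z : C) :
  Cmod g = 1 -> List.Forall in_disk a -> a <> nil -> in_disk z -> in_disk (blaschke_formula g a z).
Proof.
  intros Hg Ha Hne Hz. unfold in_disk. rewrite blaschke_formula_prod, Cmod_mult, Hg, Rmult_1_l.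
  destruct Ha as [|x a Hx Ha]; [congruence|]. simpl. rewrite Cmod_mult.
  pose proof (blaschke_factor_in_disk x z Hx Hz). pose proof (Cmod_blaschke_prod_le1 a z Ha Hz).
  unfold in_disk in *. pose proof (Cmod_ge_0 (blaschke_factor x z)). nra.
Qed.

Lemma blaschke_den_neq0 (a : list C) (z : C) : List.Forall in_disk a -> in_disk z ->
  blaschke_den a z <> RtoC 0.
Proof.
  intros Ha Hz E. apply prodC_eq0, in_map_iff in E. destruct E as [x [Ex Hx]].
  rewrite List.Forall_forall in Ha. exact (blaschke_denom_neq0 x z (Ha x Hx) Hz Ex).
Qed.

Lemma blaschke_num_eq0 (a : list C) (s : C) : blaschke_num a s = RtoC 0 -> In s a.
Proof.
  intros E. apply prodC_eq0, in_map_iff in E. destruct E as [x [Ex Hx]].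
  apply Cminus_eq0 in Ex. subst x. exact Hx.
Qed.

Lemma blaschke_prod_num_den (a : list C) (z : C) : List.Forall in_disk a -> in_disk z ->
  blaschke_prod a z = (blaschke_num a z / blaschke_den a z)%C.
Proof.
  intros Ha Hz. induction Ha as [|x a Hx Ha IH]; unfold blaschke_num, blaschke_den in *; simpl.
  - field.
  - rewrite IH. unfold blaschke_factor. pose proof (blaschke_den_neq0 a z Ha Hz) as Hden.
    field. split; [exact Hden | exact (blaschke_denom_neq0 x z Hx Hz)].
Qed.

Lemma blaschke_prod_eq0 (a : list C) (z : C) : List.Forall in_disk a -> in_disk z ->
  blaschke_prod a z = RtoC 0 -> In z a.
Proof.
  intros Ha Hz E. induction Ha as [|x a Hx Ha IH]; simpl in *.
  - apply (f_equal fst) in E. simpl in E. lra.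
  - destruct (Cmult_integral _ _ E) as [E1|E1]; [left | right; auto].
    symmetry. exact (blaschke_factor_eq0 x z (blaschke_denom_neq0 x z Hx Hz) E1).
Qed.

Definition log_deriv_factor (x z : C) : C := ((1 - Cconj x * x) / ((z - x) * (1 - Cconj x * z)))%C.
Definition log_deriv_blaschke (a : list C) (z : C) : C :=
  fold_right Cplus (RtoC 0) (map (fun x => log_deriv_factor x z) a).

Lemma is_C_derive_blaschke_prod (a : list C) (z : C) :
  List.Forall in_disk a -> in_disk z -> ~ In z a ->
  is_C_derive (blaschke_prod a) z (blaschke_prod a z * log_deriv_blaschke a z)%C.
Proof.
  intros Ha Hz Hza. induction Ha as [|x a Hx Ha IH].
  - eapply is_C_derive_eq; [apply (is_C_derive_const (RtoC 1))|].
    unfold log_deriv_blaschke. simpl. ring.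
  - assert (Hzx : (z - x)%C <> RtoC 0).
    { intros E. apply Hza. left. symmetry. apply Cminus_eq0, E. }
    pose proof (blaschke_denom_neq0 x z Hx Hz) as Hd.
    eapply is_C_derive_eq.
    + apply (is_C_derive_mult (blaschke_factor x) (blaschke_prod a));
        [apply is_C_derive_blaschke_factor, Hd|].
      apply IH. intros Hin. apply Hza. right. exact Hin.
    + change (blaschke_prod (x :: a) z) with (blaschke_factor x z * blaschke_prod a z)%C.
      change (log_deriv_blaschke (x :: a) z)
        with (log_deriv_factor x z + log_deriv_blaschke a z)%C.
      unfold log_deriv_factor, blaschke_factor. field. auto.
Qed.

(** * Polynomial functions *)

Fixpoint peval (l : list C) (z : C) : C :=
  match l with nil => RtoC 0 | a :: l' => (a + z * peval l' z)%C end.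

(* The fundamental theorem of algebra, through the algebraically closed field
   [complex R] of mathcomp. *)
Module ComplexRoots.
Import all_boot all_algebra Rstruct complex.
Import GRing.Theory.
Local Open Scope ring_scope.

Definition to_mc (z : C) : complex R := Complex (fst z) (snd z).
Definition of_mc (x : complex R) : C := (complex.Re x, complex.Im x).

Lemma to_mcK (x : complex R) : to_mc (of_mc x) = x. Proof. by case: x. Qed.

Lemma to_mc_inj (x y : C) : to_mc x = to_mc y -> x = y.
Proof. by case: x => a b; case: y => c d [-> ->]. Qed.

Lemma to_mcD (x y : C) : to_mc (Cplus x y) = to_mc x + to_mc y.
Proof. by case: x => a b; case: y => c d. Qed.

Lemma to_mcM (x y : C) : to_mc (Cmult x y) = to_mc x * to_mc y.
Proof. by case: x => a b; case: y => c d. Qed.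

Lemma to_mcB (x y : C) : to_mc (Cminus x y) = to_mc x - to_mc y.
Proof. by case: x => a b; case: y => c d. Qed.

Lemma to_mc0 : to_mc (RtoC 0%R) = 0. Proof. by []. Qed.

Lemma to_mc_peval (l : list C) (z : C) : to_mc (peval l z) = (Poly (map to_mc l)).[to_mc z].
Proof.
rewrite horner_Poly; elim: l => [|a l IH] //=.
by rewrite to_mcD to_mcM IH addrC mulrC.
Qed.

Lemma to_mc_last (l : list C) : to_mc (List.last l (RtoC 0%R)) = last 0 (map to_mc l).
Proof. by elim: l => [|a l IH] //=; case: l IH. Qed.

Lemma List_length_size {A} (l : list A) : List.length l = size l.
Proof. by elim: l => //= a l ->. Qed.

Theorem peval_split (l : list C) : List.last l (RtoC 0%R) <> RtoC 0%R ->
  exists bs : list C, List.length bs = Nat.pred (List.length l) /\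
   forall z, peval l z
             = Cmult (List.last l (RtoC 0%R)) (prodC (List.map (fun b => Cminus z b) bs)).
Proof.
move=> hl; set p := Poly (map to_mc l).
have hl' : last 0 (map to_mc l) != 0.
  by rewrite -to_mc_last -to_mc0; apply/eqP => /to_mc_inj.
have sp : size p = size (map to_mc l) by rewrite /p (PolyK hl').
have lc : lead_coef p = last 0 (map to_mc l).
  by rewrite /lead_coef sp /p (PolyK hl') (last_nth 0); case: (map to_mc l).
have [r Dp] := closed_field_poly_normal p.
exists (map of_mc r); rewrite !List_length_size; split.
  have : size p = (size r).+1 by rewrite Dp size_scale ?size_prod_XsubC // lc.
  by rewrite sp !size_map => ->.
move=> z; apply: to_mc_inj.
rewrite to_mcM to_mc_peval -/p to_mc_last -lc {1}Dp hornerZ horner_prod.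
congr (_ * _); elim: r {Dp} => [|b r IH] /=; first by rewrite big_nil.
by rewrite big_cons to_mcM to_mcB to_mcK hornerXsubC IH.
Qed.

Theorem peval_root (l : list C) : (exists z1 z2, peval l z1 <> peval l z2) ->
  exists r, peval l r = RtoC 0%R.
Proof.
move=> [z1 [z2 hz]]; set p := Poly (map to_mc l).
case: (boolP (size p == 1)) => [/eqP s1 | /closed_rootP [x /rootP px]].
- have Cp : p = (p`_0)%:P by apply: size1_polyC; rewrite s1.
  by case: hz; apply: to_mc_inj; rewrite !to_mc_peval -/p Cp !hornerC.
- by exists (of_mc x); apply: to_mc_inj; rewrite to_mc_peval to_mcK px.
Qed.
End ComplexRoots.

Fixpoint padd (l m : list C) : list C :=
  match l, m with
  | a :: l', b :: m' => (a + b)%C :: padd l' m'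
  | nil, _ => m
  | _, nil => l
  end.

Lemma peval_padd (l m : list C) (z : C) : peval (padd l m) z = (peval l z + peval m z)%C.
Proof. revert m; induction l as [|a l IH]; intros [|b m]; simpl; try ring. rewrite IH. ring. Qed.

Lemma length_padd (l m : list C) : length l = length m -> length (padd l m) = length l.
Proof.
  revert m; induction l as [|a l IH]; intros [|b m]; simpl; intros H; try lia. rewrite IH; lia.
Qed.

Lemma last_padd (l m : list C) : length l = length m ->
  last (padd l m) (RtoC 0) = (last l (RtoC 0) + last m (RtoC 0))%C.
Proof.
  revert m; induction l as [|a l IH]; intros [|b m]; simpl; intros H; try lia.
  - ring.
  - destruct l as [|a' l]; destruct m as [|b' m]; simpl in *; try lia; [reflexivity|].
    apply (IH (b' :: m)). simpl. lia.
Qed.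

(* [c] is the coefficient of [z ^ n]; it may be [0]. *)
Definition is_poly (n : nat) (c : C) (f : C -> C) : Prop :=
  exists l, length l = S n /\ last l (RtoC 0) = c /\ forall z, f z = peval l z.

Lemma is_poly_ext (n : nat) (c : C) (f g : C -> C) :
  (forall z, f z = g z) -> is_poly n c f -> is_poly n c g.
Proof. intros E [l [H1 [H2 H3]]]. exists l. repeat split; auto. intros z. rewrite <- E. auto. Qed.

Lemma is_poly_const (c : C) : is_poly 0 c (fun _ => c).
Proof. exists (c :: nil). repeat split. intros z. simpl. ring. Qed.

Lemma is_poly_zero (n : nat) : is_poly n (RtoC 0) (fun _ => RtoC 0).
Proof.
  exists (repeat (RtoC 0) (S n)). repeat split.
  - apply repeat_length.
  - induction n as [|n IH]; simpl; auto.
  - intros z. induction n as [|n IH]; simpl in *; [ring|]. rewrite <- IH. ring.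
Qed.

Lemma is_poly_plus (n : nat) (c1 c2 : C) (f g : C -> C) : is_poly n c1 f -> is_poly n c2 g ->
  is_poly n (c1 + c2)%C (fun z => f z + g z)%C.
Proof.
  intros [l [H1 [H2 H3]]] [m [K1 [K2 K3]]]. exists (padd l m). repeat split.
  - rewrite length_padd; lia.
  - rewrite last_padd by lia. congruence.
  - intros z. rewrite peval_padd, H3, K3. reflexivity.
Qed.

Lemma is_poly_scal (k : C) (n : nat) (c : C) (f : C -> C) : is_poly n c f ->
  is_poly n (k * c)%C (fun z => k * f z)%C.
Proof.
  intros [l [H1 [H2 H3]]]. exists (map (Cmult k) l). repeat split.
  - rewrite length_map. exact H1.
  - destruct l as [|a l]; [discriminate|]. rewrite <- H2. clear.
    revert a. induction l as [|b l IH]; intros a; simpl; [reflexivity | apply (IH b)].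
  - intros z. rewrite H3. clear. induction l as [|a l IH]; simpl; [ring|]. rewrite <- IH. ring.
Qed.

Lemma is_poly_mulX (n : nat) (c : C) (f : C -> C) : is_poly n c f ->
  is_poly (S n) c (fun z => z * f z)%C.
Proof.
  intros [l [H1 [H2 H3]]]. exists (RtoC 0 :: l). repeat split.
  - simpl. lia.
  - destruct l; [discriminate | exact H2].
  - intros z. simpl. rewrite H3. ring.
Qed.

Lemma is_poly_lift (n : nat) (c : C) (f : C -> C) : is_poly n c f -> is_poly (S n) (RtoC 0) f.
Proof.
  intros [l [H1 [_ H3]]]. exists (l ++ RtoC 0 :: nil). repeat split.
  - rewrite length_app. simpl. lia.
  - apply last_last.
  - intros z. rewrite H3. clear. induction l as [|a l IH]; simpl; [ring|]. rewrite IH. ring.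
Qed.

Lemma is_poly_mul_lin (al be : C) (n : nat) (c : C) (f : C -> C) : is_poly n c f ->
  is_poly (S n) (be * c)%C (fun z => (al + be * z) * f z)%C.
Proof.
  intros H. replace (be * c)%C with (al * RtoC 0 + be * c)%C by ring.
  eapply is_poly_ext; [| apply is_poly_plus;
    [apply is_poly_scal, (is_poly_lift n c), H | apply is_poly_scal, is_poly_mulX, H]].
  intros z. simpl. ring.
Qed.

Lemma is_poly_split (n : nat) (c : C) (f : C -> C) : is_poly n c f -> c <> RtoC 0 ->
  exists bs, length bs = n /\ forall z, f z = (c * prodC (map (fun b => z - b)%C bs))%C.
Proof.
  intros [l [Hl [Hc Hf]]] Hc0. subst c.
  destruct (ComplexRoots.peval_split l Hc0) as [bs [Hbs Hsplit]].
  exists bs. split; [rewrite Hbs, Hl; reflexivity|].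
  intros z. rewrite Hf. apply Hsplit.
Qed.

Lemma is_poly_root (n : nat) (c : C) (f : C -> C) : is_poly n c f ->
  (exists z1 z2, f z1 <> f z2) -> exists r, f r = RtoC 0.
Proof.
  intros [l [_ [_ Hf]]] [z1 [z2 Hz]].
  destruct (ComplexRoots.peval_root l) as [r Hr].
  - exists z1, z2. rewrite <- !Hf. exact Hz.
  - exists r. rewrite Hf. exact Hr.
Qed.

(** * Composition with a disk automorphism *)

Definition blaschke_den_lead (a : list C) : C := prodC (map (fun x => - Cconj x)%C a).

Lemma is_poly_blaschke_num (a : list C) : is_poly (length a) (RtoC 1) (blaschke_num a).
Proof.
  induction a as [|x a IH].
  - apply is_poly_const.
  - replace (RtoC 1) with (RtoC 1 * RtoC 1)%C by ring.
    eapply is_poly_ext; [| apply (is_poly_mul_lin (- x)%C (RtoC 1)), IH].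
    intros z. unfold blaschke_num. simpl. ring.
Qed.

Lemma is_poly_blaschke_den (a : list C) :
  is_poly (length a) (blaschke_den_lead a) (blaschke_den a).
Proof.
  induction a as [|x a IH].
  - apply is_poly_const.
  - eapply is_poly_ext; [| apply (is_poly_mul_lin (RtoC 1) (- Cconj x)%C), IH].
    intros z. unfold blaschke_den. simpl. ring.
Qed.

Lemma Cconj_blaschke_den_lead (a : list C) : Cconj (blaschke_den_lead a) = blaschke_num a (RtoC 0).
Proof.
  induction a as [|x a IH]; unfold blaschke_den_lead, blaschke_num in *; simpl.
  - apply Cconj_RtoC.
  - rewrite Cmult_conj, IH, Copp_conj, Cconj_conj. ring.
Qed.

Lemma Cmod_blaschke_den_lead_le1 (a : list C) : List.Forall in_disk a ->
  Cmod (blaschke_den_lead a) <= 1.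
Proof.
  intros Ha. induction Ha as [|x a Hx Ha IH]; unfold blaschke_den_lead in *; simpl.
  - rewrite Cmod_1. lra.
  - rewrite Cmod_mult, Cmod_opp, Cmod_conj. unfold in_disk in Hx.
    pose proof (Cmod_ge_0 x). pose proof (Cmod_ge_0 (prodC (map (fun y => (- Cconj y)%C) a))). nra.
Qed.

Lemma blaschke_den_0 (a : list C) : blaschke_den a (RtoC 0) = RtoC 1.
Proof.
  induction a as [|x a IH]; unfold blaschke_den in *; simpl; [reflexivity|]. rewrite IH. ring.
Qed.

Lemma blaschke_den_reflect (a : list C) (z : C) : z <> RtoC 0 ->
  blaschke_den a z = (z ^ length a * Cconj (blaschke_num a (/ Cconj z)))%C.
Proof.
  intros Hz. pose proof (Cconj_neq0 z Hz).
  induction a as [|x a IH]; unfold blaschke_den, blaschke_num in *; simpl.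
  - rewrite Cconj_RtoC. ring.
  - rewrite IH, Cmult_conj, Cminus_conj, Cinv_conj, !Cconj_conj by auto. field. auto.
Qed.

Lemma blaschke_num_reflect (a : list C) (z : C) : z <> RtoC 0 ->
  blaschke_num a z = (z ^ length a * Cconj (blaschke_den a (/ Cconj z)))%C.
Proof.
  intros Hz. pose proof (Cconj_neq0 z Hz).
  induction a as [|x a IH]; unfold blaschke_den, blaschke_num in *; simpl.
  - rewrite Cconj_RtoC. ring.
  - rewrite IH, Cmult_conj, Cminus_conj, Cmult_conj, Cinv_conj, Cconj_conj, Cconj_RtoC by auto.
    rewrite Cconj_conj. field. auto.
Qed.

Lemma Cmod_blaschke_den_le_num (a : list C) (s : C) : List.Forall in_disk a -> 1 <= Cmod s ->
  Cmod (blaschke_den a s) <= Cmod (blaschke_num a s).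
Proof.
  intros Ha Hs. induction Ha as [|x a Hx Ha IH]; unfold blaschke_den, blaschke_num in *; simpl.
  - lra.
  - rewrite !Cmod_mult. apply Rmult_le_compat; auto using Cmod_ge_0, Cmod_blaschke_denom_le.
Qed.

Section BlaschkeFactorComp.

Variables (g w : C) (a : list C).
Hypotheses (Hg : Cmod g = 1) (Hw : in_disk w) (Ha : List.Forall in_disk a).

(* [blaschke_factor w (g * num / den)] has numerator [g * num - w * den], whose
   coefficient of [z ^ length a] is [c]. *)
Let c : C := (g - w * blaschke_den_lead a)%C.

Lemma comp_lead_neq0 : c <> RtoC 0.
Proof.
  intro E. assert (E' : g = (w * blaschke_den_lead a)%C).
  { replace g with (c + w * blaschke_den_lead a)%C by (unfold c; ring). rewrite E. ring. }
  apply (f_equal Cmod) in E'. rewrite Cmod_mult, Hg in E'.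
  pose proof (Cmod_blaschke_den_lead_le1 a Ha). unfold in_disk in Hw.
  pose proof (Cmod_ge_0 w). pose proof (Cmod_ge_0 (blaschke_den_lead a)). nra.
Qed.

Lemma comp_num_root_in_disk (s : C) :
  (g * blaschke_num a s - w * blaschke_den a s)%C = RtoC 0 -> in_disk s.
Proof.
  intros E. destruct (Rlt_or_le (Cmod s) 1) as [Hlt|Hge]; [exact Hlt | exfalso].
  assert (E2 : (g * blaschke_num a s)%C = (w * blaschke_den a s)%C).
  { replace (g * blaschke_num a s)%C
      with ((g * blaschke_num a s - w * blaschke_den a s) + w * blaschke_den a s)%C by ring.
    rewrite E. ring. }
  apply (f_equal Cmod) in E2. rewrite !Cmod_mult, Hg in E2.
  pose proof (Cmod_blaschke_den_le_num a s Ha Hge). unfold in_disk in Hw.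
  pose proof (Cmod_ge_0 w). pose proof (Cmod_ge_0 (blaschke_den a s)).
  assert (Hz : Cmod (blaschke_num a s) = 0) by nra.
  apply Cmod_eq_0, blaschke_num_eq0 in Hz.
  rewrite List.Forall_forall in Ha. specialize (Ha s Hz). unfold in_disk in Ha. lra.
Qed.

Lemma comp_num_split : exists b, length b = length a /\ List.Forall in_disk b /\
  forall z, (g * blaschke_num a z - w * blaschke_den a z)%C = (c * blaschke_num b z)%C.
Proof.
  assert (Hpoly : is_poly (length a) c (fun z => g * blaschke_num a z - w * blaschke_den a z)%C).
  { replace c with (g * RtoC 1 + - w * blaschke_den_lead a)%C by (unfold c; ring).
    eapply is_poly_ext; [| apply is_poly_plus;
      [apply is_poly_scal, is_poly_blaschke_num | apply is_poly_scal, is_poly_blaschke_den]].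
    intros z. simpl. ring. }
  destruct (is_poly_split _ _ _ Hpoly comp_lead_neq0) as [b [Hb Hsplit]].
  exists b. repeat split; [exact Hb | | exact Hsplit].
  apply List.Forall_forall. intros s Hs. apply comp_num_root_in_disk.
  rewrite Hsplit, prodC_map_sub_eq0 by exact Hs. ring.
Qed.

(* The reflection [z |-> 1 / conj z] exchanges [blaschke_num] and [blaschke_den]. *)
Lemma comp_den_eq (b : list C) : length b = length a ->
  (forall z, (g * blaschke_num a z - w * blaschke_den a z)%C = (c * blaschke_num b z)%C) ->
  forall z, (blaschke_den a z - Cconj w * g * blaschke_num a z)%C
            = (g * Cconj c * blaschke_den b z)%C.
Proof.
  intros Hb Hsplit z. pose proof (Cmod1_mul_conj g Hg) as Hgg.
  destruct (Ceq_dec z (RtoC 0)) as [->|Hz].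
  - rewrite !blaschke_den_0. unfold c.
    rewrite Cminus_conj, Cmult_conj, Cconj_blaschke_den_lead.
    transitivity (g * Cconj g - Cconj w * g * blaschke_num a (RtoC 0))%C; [rewrite Hgg|]; ring.
  - set (zeta := (/ Cconj z)%C).
    assert (E : Cconj (g * blaschke_num a zeta - w * blaschke_den a zeta)%C
                = Cconj (c * blaschke_num b zeta)%C) by now rewrite Hsplit.
    rewrite Cminus_conj, !Cmult_conj in E.
    rewrite (blaschke_den_reflect a z Hz), (blaschke_num_reflect a z Hz),
      (blaschke_den_reflect b z Hz), Hb. fold zeta.
    transitivity (g * z ^ length a * (Cconj c * Cconj (blaschke_num b zeta)))%C; [| ring].
    rewrite <- E.
    replace (z ^ length a * Cconj (blaschke_num a zeta))%C
      with (g * Cconj g * (z ^ length a * Cconj (blaschke_num a zeta)))%C by (rewrite Hgg; ring).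
    ring.
Qed.

Lemma blaschke_factor_comp_formula : exists g' b,
  Cmod g' = 1 /\ length b = length a /\ List.Forall in_disk b /\
  forall z, in_disk z -> blaschke_factor w (blaschke_formula g a z) = blaschke_formula g' b z.
Proof.
  destruct comp_num_split as [b [Hlen [Hb Hsplit]]].
  pose proof comp_lead_neq0 as Hc. pose proof (Cconj_neq0 c Hc) as Hcc.
  assert (Hg0 : g <> RtoC 0) by (intro E; rewrite E, Cmod_0 in Hg; lra).
  exists (c / (g * Cconj c))%C, b. repeat split; [| exact Hlen | exact Hb |].
  - rewrite Cmod_div, Cmod_mult, Cmod_conj, Hg by (apply Cmult_neq_0; auto).
    field. apply Rgt_not_eq, Cmod_gt_0, Hc.
  - intros z Hz.
    pose proof (blaschke_den_neq0 a z Ha Hz) as Hda. pose proof (blaschke_den_neq0 b z Hb Hz).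
    pose proof (comp_den_eq b Hlen Hsplit z) as Hden.
    assert (Hdenom : (blaschke_den a z - Cconj w * g * blaschke_num a z)%C <> RtoC 0).
    { rewrite Hden. repeat apply Cmult_neq_0; auto. }
    rewrite !blaschke_formula_prod, !blaschke_prod_num_den by assumption.
    unfold blaschke_factor.
    replace ((g * (blaschke_num a z / blaschke_den a z) - w) /
             (1 - Cconj w * (g * (blaschke_num a z / blaschke_den a z))))%C
      with ((g * blaschke_num a z - w * blaschke_den a z) /
            (blaschke_den a z - Cconj w * g * blaschke_num a z))%C
      by (field; rewrite Cmult_assoc; auto).
    rewrite Hsplit, Hden. field. auto.
Qed.

End BlaschkeFactorComp.

(** * Critical points off the zeros *)

Definition quad (y z : C) : C := ((z - y) * (1 - Cconj y * z))%C.
Definition quad_prod (V : list C) (z : C) : C := prodC (map (fun y => quad y z) V).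

(* For [U] the distinct zeros of [b], [crit_sum U b] is the logarithmic
   derivative of [blaschke_prod b] with its denominators cleared. *)
Definition crit_sum (U b : list C) (z : C) : C :=
  fold_right Cplus (RtoC 0)
    (map (fun x => RtoC (1 - Cmod x ^ 2) * quad_prod (remove Ceq_dec x U) z)%C b).

Lemma quad_neq0 (y z : C) : in_disk y -> in_disk z -> y <> z -> quad y z <> RtoC 0.
Proof.
  intros Hy Hz Hyz E. destruct (Cmult_integral _ _ E) as [E1|E1].
  - apply Hyz. symmetry. apply Cminus_eq0, E1.
  - exact (blaschke_denom_neq0 y z Hy Hz E1).
Qed.

Lemma quad_prod_eq0 (V : list C) (u : C) : In u V -> quad_prod V u = RtoC 0.
Proof.
  unfold quad_prod. induction V as [|y V IH]; simpl; [contradiction|]. intros [->|H].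
  - unfold quad. replace (u - u)%C with (RtoC 0) by ring. ring.
  - rewrite IH by exact H. ring.
Qed.

Lemma quad_prod_neq0 (V : list C) (z : C) : List.Forall in_disk V -> in_disk z -> ~ In z V ->
  quad_prod V z <> RtoC 0.
Proof.
  intros HV Hz Hn E. apply prodC_eq0, in_map_iff in E. destruct E as [y [Ey Hy]].
  rewrite List.Forall_forall in HV. apply (quad_neq0 y z (HV y Hy) Hz); [| exact Ey].
  intros ->. contradiction.
Qed.

Lemma quad_prod_remove (U : list C) (x z : C) : NoDup U -> In x U ->
  quad_prod U z = (quad x z * quad_prod (remove Ceq_dec x U) z)%C.
Proof.
  unfold quad_prod. induction U as [|y U IH]; simpl; intros Hd Hx; [contradiction|].
  inversion Hd as [|? ? HyU HdU]; subst.
  destruct (Ceq_dec x y) as [->|Hne].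
  - rewrite notin_remove by exact HyU. reflexivity.
  - destruct Hx as [->|Hx]; [congruence|]. simpl. rewrite IH by assumption. ring.
Qed.

Lemma length_remove_NoDup (U : list C) (x : C) : NoDup U -> In x U ->
  length (remove Ceq_dec x U) = pred (length U).
Proof.
  induction U as [|y U IH]; simpl; intros Hd Hx; [contradiction|].
  inversion Hd as [|? ? HyU HdU]; subst.
  destruct (Ceq_dec x y) as [->|Hne].
  - rewrite notin_remove by exact HyU. reflexivity.
  - destruct Hx as [->|Hx]; [congruence|]. simpl. rewrite IH by assumption.
    destruct U; [contradiction | reflexivity].
Qed.

Lemma is_poly_quad_prod (V : list C) : exists c, is_poly (2 * length V) c (quad_prod V).
Proof.
  induction V as [|y V [c IH]].
  - exists (RtoC 1). apply is_poly_const.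
  - exists (- Cconj y * (RtoC 1 * c))%C.
    replace (2 * length (y :: V))%nat with (S (S (2 * length V))) by (simpl; lia).
    eapply is_poly_ext; [| apply (is_poly_mul_lin (RtoC 1) (- Cconj y)%C),
                             (is_poly_mul_lin (- y)%C (RtoC 1)), IH].
    intros z. unfold quad_prod, quad. simpl. ring.
Qed.

Lemma is_poly_crit_sum (U b : list C) (e : nat) :
  (forall x, In x b -> length (remove Ceq_dec x U) = e) ->
  exists c, is_poly (2 * e) c (crit_sum U b).
Proof.
  induction b as [|x b IH]; intros He.
  - exists (RtoC 0). apply is_poly_zero.
  - destruct IH as [c1 H1]; [intros y Hy; apply He; right; exact Hy|].
    destruct (is_poly_quad_prod (remove Ceq_dec x U)) as [c2 H2].
    rewrite (He x (or_introl eq_refl)) in H2.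
    exists (RtoC (1 - Cmod x ^ 2) * c2 + c1)%C.
    apply is_poly_plus; [apply is_poly_scal, H2 | exact H1].
Qed.

Lemma crit_sum_log_deriv (U b : list C) (z : C) : NoDup U -> incl b U ->
  List.Forall in_disk U -> in_disk z -> ~ In z U ->
  crit_sum U b z = (log_deriv_blaschke b z * quad_prod U z)%C.
Proof.
  intros Hd Hb HU Hz HzU. induction b as [|x b IH]; unfold crit_sum, log_deriv_blaschke in *;
    cbn [fold_right map].
  - ring.
  - assert (HxU : In x U) by (apply Hb; left; reflexivity).
    rewrite IH by (intros y Hy; apply Hb; right; exact Hy).
    rewrite (quad_prod_remove U x z Hd HxU).
    assert (Hzx : (z - x)%C <> RtoC 0).
    { intros E. apply Cminus_eq0 in E. subst z. contradiction. }
    rewrite List.Forall_forall in HU. pose proof (blaschke_denom_neq0 x z (HU x HxU) Hz).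
    rewrite RtoC_minus, Cmod2_conj. unfold log_deriv_factor, quad. field. auto.
Qed.

Lemma crit_sum_at_zero (U b : list C) (u : C) : In u U ->
  crit_sum U b u
  = (RtoC ((1 - Cmod u ^ 2) * INR (count_occ Ceq_dec b u)) * quad_prod (remove Ceq_dec u U) u)%C.
Proof.
  intros Hu. induction b as [|x b IH]; unfold crit_sum in *; cbn [fold_right map count_occ].
  - replace (RtoC 0) with (RtoC 0%R) by reflexivity. rewrite Rmult_0_r. ring.
  - rewrite IH. destruct (Ceq_dec x u) as [->|Hne].
    + rewrite S_INR, Rmult_plus_distr_l, Rmult_1_r, RtoC_plus. ring.
    + rewrite (quad_prod_eq0 (remove Ceq_dec x U) u) by (apply in_in_remove; auto). ring.
Qed.

Lemma crit_sum_at_zero_neq0 (U b : list C) (u : C) : List.Forall in_disk U -> In u U -> In u b ->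
  crit_sum U b u <> RtoC 0.
Proof.
  intros HU Hu Hub E. rewrite (crit_sum_at_zero U b u Hu) in E.
  assert (Hud : in_disk u) by (rewrite List.Forall_forall in HU; auto).
  destruct (Cmult_integral _ _ E) as [E1|E1].
  - apply (f_equal fst) in E1. simpl in E1.
    pose proof (one_sub_Cmod_sqr_pos u Hud).
    pose proof (lt_0_INR _ (proj1 (count_occ_In Ceq_dec b u) Hub)). nra.
  - revert E1. apply quad_prod_neq0; [| exact Hud | apply remove_In].
    rewrite List.Forall_forall in HU |- *. intros y Hy. apply in_remove in Hy. apply HU, Hy.
Qed.

Lemma sum_pos {A} (f : A -> R) (l : list A) : (forall x, In x l -> 0 < f x) -> l <> nil ->
  0 < fold_right Rplus 0 (map f l).
Proof.
  induction l as [|x l IH]; simpl; intros H Hne; [congruence|].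
  pose proof (H x (or_introl eq_refl)).
  destruct l as [|y l]; [simpl; lra|].
  assert (0 < fold_right Rplus 0 (map f (y :: l))) by (apply IH; [auto | discriminate]). lra.
Qed.

Lemma prod_pos {A} (f : A -> R) (l : list A) : (forall x, In x l -> 0 < f x) ->
  0 < fold_right Rmult 1 (map f l).
Proof.
  induction l as [|x l IH]; simpl; intros H; [lra|].
  apply Rmult_lt_0_compat; auto.
Qed.

(* On the unit circle [quad y z = z * |z - y|^2]. *)
Definition dist_prod (V : list C) (z : C) : R :=
  fold_right Rmult 1 (map (fun y => Cmod (z - y)%C ^ 2) V).

Definition crit_sum_circle (U b : list C) (z : C) : R :=
  fold_right Rplus 0 (map (fun x => (1 - Cmod x ^ 2) * dist_prod (remove Ceq_dec x U) z) b).

Lemma quad_prod_circle (V : list C) (z : C) : Cmod z = 1 ->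
  quad_prod V z = (z ^ length V * RtoC (dist_prod V z))%C.
Proof.
  intros Hz. pose proof (Cmod1_mul_conj z Hz) as Hzz.
  induction V as [|y V IH]; unfold quad_prod, dist_prod, prodC in *;
    cbn [fold_right map length Cpow].
  - ring.
  - rewrite IH, RtoC_mult, Cmod2_conj, Cminus_conj. unfold quad.
    replace (1 - Cconj y * z)%C with (z * Cconj z - Cconj y * z)%C by (rewrite Hzz; reflexivity).
    ring.
Qed.

Lemma crit_sum_on_circle (U b : list C) (z : C) (e : nat) : Cmod z = 1 ->
  (forall x, In x b -> length (remove Ceq_dec x U) = e) ->
  crit_sum U b z = (z ^ e * RtoC (crit_sum_circle U b z))%C.
Proof.
  intros Hz He. induction b as [|x b IH]; unfold crit_sum, crit_sum_circle in *;
    cbn [fold_right map].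
  - replace (RtoC 0) with (RtoC 0%R) by reflexivity. ring.
  - rewrite IH by (intros y Hy; apply He; right; exact Hy).
    rewrite quad_prod_circle, He by (auto || (left; reflexivity)).
    rewrite RtoC_plus, RtoC_mult. ring.
Qed.

Lemma crit_sum_circle_pos (U b : list C) (z : C) : List.Forall in_disk U ->
  List.Forall in_disk b -> b <> nil -> Cmod z = 1 -> 0 < crit_sum_circle U b z.
Proof.
  intros HU Hb Hne Hz. apply sum_pos; [| exact Hne].
  intros x Hx. rewrite List.Forall_forall in HU, Hb.
  apply Rmult_lt_0_compat; [apply one_sub_Cmod_sqr_pos, Hb, Hx|].
  apply prod_pos. intros y Hy. apply in_remove in Hy.
  assert (Hzy : (z - y)%C <> RtoC 0).
  { intros E. apply Cminus_eq0 in E. subst y.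
    specialize (HU z (proj1 Hy)). unfold in_disk in HU. lra. }
  apply pow_lt, Cmod_gt_0, Hzy.
Qed.

Lemma quad_reflect (y z : C) : z <> RtoC 0 ->
  quad y z = (z ^ 2 * Cconj (quad y (/ Cconj z)))%C.
Proof.
  intros Hz. pose proof (Cconj_neq0 z Hz). unfold quad.
  rewrite !Cmult_conj, !Cminus_conj, Cmult_conj, Cinv_conj, !Cconj_conj, Cconj_RtoC by auto.
  field. auto.
Qed.

Lemma quad_prod_reflect (V : list C) (z : C) : z <> RtoC 0 ->
  quad_prod V z = (z ^ (2 * length V) * Cconj (quad_prod V (/ Cconj z)))%C.
Proof.
  intros Hz. induction V as [|y V IH]; unfold quad_prod, prodC in *; cbn [fold_right map].
  - simpl. rewrite Cconj_RtoC. ring.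
  - rewrite IH, (quad_reflect y z Hz), Cmult_conj.
    replace (2 * length (y :: V))%nat with (2 + 2 * length V)%nat by (simpl; lia).
    rewrite Cpow_add_r. ring.
Qed.

Lemma crit_sum_reflect (U b : list C) (z : C) (e : nat) : z <> RtoC 0 ->
  (forall x, In x b -> length (remove Ceq_dec x U) = e) ->
  crit_sum U b z = (z ^ (2 * e) * Cconj (crit_sum U b (/ Cconj z)))%C.
Proof.
  intros Hz He. induction b as [|x b IH]; unfold crit_sum in *; cbn [fold_right map count_occ].
  - rewrite Cconj_RtoC. ring.
  - rewrite IH by (intros y Hy; apply He; right; exact Hy).
    rewrite (quad_prod_reflect _ z Hz), He by (left; reflexivity).
    rewrite Cplus_conj, Cmult_conj, Cconj_RtoC. ring.
Qed.

Lemma two_pow_neq1 (e : nat) : (1 <= e)%nat -> (RtoC 2 ^ (2 * e))%C <> RtoC 1.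
Proof.
  intros He E. rewrite <- RtoC_pow in E. apply (f_equal fst) in E.
  change (2 ^ (2 * e) = 1) in E.
  assert (2 ^ 2 <= 2 ^ (2 * e)) by (apply Rle_pow; [lra | lia]). lra.
Qed.

Section CriticalPoint.

Variable b : list C.
Hypothesis Hb : List.Forall in_disk b.
Hypothesis Hdistinct : exists x y, In x b /\ In y b /\ x <> y.

Let U : list C := nodup Ceq_dec b.
Let e : nat := pred (length U).
Let N : C -> C := crit_sum U b.

Lemma length_remove_nodup (x : C) : In x b -> length (remove Ceq_dec x U) = e.
Proof. intros Hx. apply length_remove_NoDup; [apply NoDup_nodup | apply nodup_In, Hx]. Qed.

Lemma nodup_in_disk : List.Forall in_disk U.
Proof.
  rewrite List.Forall_forall in Hb |- *. intros t Ht. apply Hb, (nodup_In Ceq_dec), Ht.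
Qed.

Lemma crit_degree_pos : (1 <= e)%nat.
Proof.
  destruct Hdistinct as [x [y [Hx [Hy Hxy]]]].
  rewrite <- (length_remove_nodup x Hx).
  assert (Hin : In y (remove Ceq_dec x U)) by (apply in_in_remove; [auto | apply nodup_In, Hy]).
  destruct (remove Ceq_dec x U); [contradiction | simpl; lia].
Qed.

Lemma crit_sum_circle_neq0 (z : C) : Cmod z = 1 -> N z <> RtoC 0.
Proof.
  intros Hz E. unfold N in E. rewrite (crit_sum_on_circle U b z e Hz length_remove_nodup) in E.
  destruct (Cmult_integral _ _ E) as [E1|E1].
  - apply (Cpow_nz z e); [| exact E1]. intros ->. rewrite Cmod_0 in Hz. lra.
  - apply (f_equal fst) in E1. simpl in E1.
    assert (Hne : b <> nil) by (destruct Hdistinct as [x [_ [Hx _]]]; intros ->; contradiction).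
    pose proof (crit_sum_circle_pos U b z nodup_in_disk Hb Hne Hz). lra.
Qed.

(* A constant [K] would satisfy [K = conj K] (reflection at [1]) and
   [K = 2^(2e) conj K] (reflection at [2]). *)
Lemma crit_sum_nonconstant : exists z1 z2, N z1 <> N z2.
Proof.
  apply NNPP. intros Hc.
  assert (Hconst : forall z, N z = N (RtoC 1)).
  { intros z. apply NNPP. intros H. apply Hc. exists z, (RtoC 1). exact H. }
  assert (HK : N (RtoC 1) <> RtoC 0) by (apply crit_sum_circle_neq0, Cmod_1).
  assert (Hreal : N (RtoC 1) = Cconj (N (RtoC 1))).
  { unfold N at 1. rewrite (crit_sum_reflect U b (RtoC 1) e) by
      (apply length_remove_nodup || (intros E; apply (f_equal fst) in E; simpl in E; lra)).
    fold N. rewrite Hconst, Cpow_1_l. ring. }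
  assert (H2 : N (RtoC 2) = (RtoC 2 ^ (2 * e) * N (RtoC 1))%C).
  { unfold N at 1. rewrite (crit_sum_reflect U b (RtoC 2) e) by
      (apply length_remove_nodup || (intros E; apply (f_equal fst) in E; simpl in E; lra)).
    fold N. rewrite Hconst, <- Hreal. reflexivity. }
  rewrite Hconst in H2. apply (two_pow_neq1 e crit_degree_pos).
  replace (RtoC 2 ^ (2 * e))%C with ((RtoC 2 ^ (2 * e) * N (RtoC 1)) / N (RtoC 1))%C
    by (field; exact HK).
  rewrite <- H2. field. exact HK.
Qed.

Lemma crit_sum_root_in_disk : exists r, in_disk r /\ N r = RtoC 0.
Proof.
  destruct (is_poly_crit_sum U b e length_remove_nodup) as [c Hpoly].
  destruct (is_poly_root _ _ _ Hpoly crit_sum_nonconstant) as [s Hs]. fold N in Hs.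
  destruct (Rtotal_order (Cmod s) 1) as [Hlt|[Heq|Hgt]].
  - exists s. split; [exact Hlt | exact Hs].
  - exfalso. exact (crit_sum_circle_neq0 s Heq Hs).
  - assert (Hs0 : s <> RtoC 0) by (intros ->; rewrite Cmod_0 in Hgt; lra).
    pose proof (Cconj_neq0 s Hs0) as Hcs.
    exists (/ Cconj s)%C. split.
    + unfold in_disk. rewrite Cmod_inv, Cmod_conj by exact Hcs.
      rewrite <- Rinv_1. apply Rinv_lt_contravar; lra.
    + assert (Hr0 : (/ Cconj s)%C <> RtoC 0) by (apply Cinv_neq0, Hcs).
      unfold N. rewrite (crit_sum_reflect U b (/ Cconj s)%C e Hr0 length_remove_nodup).
      rewrite Cinv_conj, Cconj_conj by exact Hcs.
      replace (/ / s)%C with s by (field; exact Hs0). fold N. rewrite Hs, Cconj_RtoC. ring.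
Qed.

Lemma blaschke_prod_critical_point : exists r, in_disk r /\ ~ In r b /\
  is_C_derive (blaschke_prod b) r (RtoC 0).
Proof.
  destruct crit_sum_root_in_disk as [r [Hr HNr]].
  assert (HrU : ~ In r U).
  { intros Hin. apply (crit_sum_at_zero_neq0 U b r nodup_in_disk Hin); [| exact HNr].
    apply (nodup_In Ceq_dec), Hin. }
  assert (Hrb : ~ In r b) by (intros Hin; apply HrU, nodup_In, Hin).
  exists r. split; [exact Hr | split; [exact Hrb |]].
  eapply is_C_derive_eq; [apply is_C_derive_blaschke_prod; assumption|].
  assert (Hlog : N r = (log_deriv_blaschke b r * quad_prod U r)%C).
  { apply crit_sum_log_deriv; [apply NoDup_nodup | | apply nodup_in_disk | exact Hr | exact HrU].
    intros t Ht. apply nodup_In, Ht. }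
  rewrite Hlog in HNr. destruct (Cmult_integral _ _ HNr) as [E|E].
  - rewrite E. ring.
  - exfalso. revert E. apply quad_prod_neq0; [apply nodup_in_disk | exact Hr | exact HrU].
Qed.

End CriticalPoint.

(** * Blaschke products with one critical value *)

Lemma critical_value_comp_blaschke_factor (B F : C -> C) (w r : C) :
  in_disk w -> in_disk r -> in_disk (F r) ->
  (forall z, in_disk z -> B z = blaschke_factor (- w)%C (F z)) ->
  is_C_derive F r (RtoC 0) -> critical_value B (B r).
Proof.
  intros Hw Hr HFr HB HF. split.
  - rewrite HB by exact Hr. apply blaschke_factor_in_disk; [apply in_disk_opp, Hw | exact HFr].
  - exists r. split; [exact Hr | split; [| reflexivity]].
    apply (is_C_derive_ext_disk (fun z => blaschke_factor (- w)%C (F z)));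
      [exact Hr | intros z Hz; symmetry; apply HB, Hz |].
    eapply is_C_derive_eq; [apply (is_C_derive_comp (blaschke_factor (- w)%C) F); [| exact HF]|].
    + apply is_C_derive_blaschke_factor, blaschke_denom_neq0; [apply in_disk_opp, Hw | exact HFr].
    + ring.
Qed.

(* A critical point of [blaschke_prod b] off its zeros would give a critical
   value of [B] other than [w]. *)
Lemma unique_critical_value_zeros_equal (B : C -> C) (g w : C) (b : list C) :
  Cmod g = 1 -> List.Forall in_disk b -> b <> nil -> in_disk w ->
  (forall z, in_disk z -> B z = blaschke_factor (- w)%C (blaschke_formula g b z)) ->
  (forall w', critical_value B w' -> w' = w) ->
  forall x y, In x b -> In y b -> x = y.
Proof.
  intros Hg Hb Hne Hw HB Huniq. apply NNPP. intros Hdistinct.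
  destruct (blaschke_prod_critical_point b Hb) as [r [Hr [Hrb Hcrit]]].
  { apply NNPP. intros Hno. apply Hdistinct. intros x y Hx Hy. apply NNPP. intros Hxy.
    apply Hno. exists x, y. auto. }
  assert (HFr : in_disk (blaschke_formula g b r)) by (apply blaschke_formula_in_disk; assumption).
  assert (HF : is_C_derive (blaschke_formula g b) r (RtoC 0)).
  { eapply is_C_derive_eq; [apply (is_C_derive_mult (fun _ => g) (blaschke_prod b));
      [apply is_C_derive_const | exact Hcrit]|]. ring. }
  pose proof (Huniq _ (critical_value_comp_blaschke_factor B _ w r Hw Hr HFr HB HF)) as HBr.
  assert (Hzero : blaschke_formula g b r = RtoC 0).
  { transitivity (blaschke_factor w (B r)).
    - rewrite HB by exact Hr.
      replace (blaschke_factor w) with (blaschke_factor (- - w)%C) by (f_equal; ring).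
      symmetry.
      apply blaschke_factor_opp_K; [apply in_disk_opp, Hw | exact HFr].
    - rewrite HBr. apply blaschke_factor_self, Hw. }
  rewrite blaschke_formula_prod in Hzero. destruct (Cmult_integral _ _ Hzero) as [E|E].
  - rewrite E, Cmod_0 in Hg. lra.
  - apply Hrb, (blaschke_prod_eq0 b r Hb Hr E).
Qed.

Lemma FBP_1_no_critical_point (B : C -> C) (z : C) :
  is_FBP 1 B -> in_disk z -> ~ is_critical_point B z.
Proof.
  intros [g [a [Hg [Hlen [Ha HB]]]]] Hz Hcrit.
  destruct a as [|x [|y a]]; try discriminate.
  inversion Ha as [|? ? Hx _]; subst.
  pose proof (blaschke_denom_neq0 x z Hx Hz) as Hd.
  assert (HD : is_C_derive B z
                 (g * ((1 - Cconj x * x) / ((1 - Cconj x * z) * (1 - Cconj x * z))))%C).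
  { apply (is_C_derive_ext_disk (fun t => g * blaschke_factor x t)%C); [exact Hz | |].
    - intros t Ht. rewrite HB by exact Ht. unfold blaschke_formula. simpl. ring.
    - eapply is_C_derive_eq; [apply is_C_derive_mult;
        [apply is_C_derive_const | apply is_C_derive_blaschke_factor, Hd]|].
      cbv beta. ring. }
  apply is_C_derive_unique in HD. apply is_C_derive_unique in Hcrit. rewrite Hcrit in HD.
  symmetry in HD. revert HD. apply Cmult_neq_0.
  - intros E. rewrite E, Cmod_0 in Hg. lra.
  - unfold Cdiv. apply Cmult_neq_0; [apply blaschke_denom_neq0; exact Hx|].
    apply Cinv_neq0, Cmult_neq_0; exact Hd.
Qed.

Lemma FBP_unique_critical_value_power (n : nat) (B : C -> C) (w : C) :
  is_FBP n B -> critical_value B w -> (forall w', critical_value B w' -> w' = w) ->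
  exists g c, Cmod g = 1 /\ in_disk c /\
    forall z, in_disk z -> B z = blaschke_factor (- w)%C (g * blaschke_factor c z ^ n)%C.
Proof.
  intros [g0 [a [Hg0 [Hlen [Ha HBa]]]]] [Hw [z0 [Hz0 [_ Hwz0]]]] Huniq.
  assert (Hane : a <> nil).
  { intros ->. rewrite Hwz0, HBa in Hw by exact Hz0. unfold in_disk in Hw.
    rewrite blaschke_formula_prod, Cmod_mult, Hg0 in Hw. simpl in Hw. rewrite Cmod_1 in Hw. lra. }
  destruct (blaschke_factor_comp_formula g0 w a Hg0 Hw Ha) as [g [b [Hg [Hlb [Hb Hcomp]]]]].
  assert (HBb : forall z, in_disk z -> B z = blaschke_factor (- w)%C (blaschke_formula g b z)).
  { intros z Hz. rewrite <- Hcomp, HBa by exact Hz. symmetry.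
    apply blaschke_factor_opp_K; [exact Hw | apply blaschke_formula_in_disk; assumption]. }
  destruct b as [|c b']; [destruct a; [contradiction | discriminate]|].
  pose proof (unique_critical_value_zeros_equal B g w (c :: b') Hg Hb ltac:(discriminate)
                Hw HBb Huniq) as Hequal.
  assert (Hrep : c :: b' = repeat c n).
  { rewrite <- Hlen, <- Hlb. apply Forall_eq_repeat, List.Forall_forall.
    intros x Hx. apply Hequal; [left; reflexivity | exact Hx]. }
  exists g, c. split; [exact Hg | split; [inversion Hb; assumption |]].
  intros z Hz. rewrite HBb, Hrep, blaschke_formula_prod, blaschke_prod_repeat by exact Hz.
  reflexivity.
Qed.

Lemma fold_compose_init (Bs : nat -> C -> C) (h : C -> C) (l : list nat) (z : C) :
  fold_right (fun j acc => fun u => Bs j (acc u)) h l z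
  = fold_right (fun j acc => fun u => Bs j (acc u)) (fun u => u) l (h z).
Proof. induction l as [|j l IH]; simpl; [reflexivity | now rewrite IH]. Qed.

Lemma compose_list_S (Bs : nat -> C -> C) (m : nat) (z : C) :
  compose_list Bs (S m) z = compose_list Bs m (Bs m z).
Proof. unfold compose_list. rewrite seq_S, fold_right_app. apply fold_compose_init. Qed.

Lemma compose_list_cons (Bs : nat -> C -> C) (m : nat) (z : C) :
  compose_list Bs (S m) z = Bs 0%nat (compose_list (fun j => Bs (S j)) m z).
Proof.
  unfold compose_list. cbn [seq fold_right]. f_equal. rewrite <- seq_shift.
  induction (seq 0 m) as [|j l IH]; simpl; [reflexivity | now rewrite IH].
Qed.

Lemma compose_list_ext (Bs Cs : nat -> C -> C) (m : nat) (z : C) :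
  (forall j u, (j < m)%nat -> Bs j u = Cs j u) -> compose_list Bs m z = compose_list Cs m z.
Proof.
  intros H. unfold compose_list.
  assert (Hl : forall j, In j (seq 0 m) -> forall u, Bs j u = Cs j u)
    by (intros j Hj u; apply in_seq in Hj; apply H; lia).
  induction (seq 0 m) as [|j l IH]; simpl; [reflexivity|].
  rewrite Hl by (left; reflexivity). f_equal. apply IH. intros i Hi. apply Hl. right. exact Hi.
Qed.

Lemma prod_upto_S (q : nat -> nat) (m : nat) : prod_upto q (S m) = (prod_upto q m * q m)%nat.
Proof.
  unfold prod_upto. rewrite seq_S, fold_right_app. simpl.
  induction (seq 0 m) as [|j l IH]; simpl; [lia | rewrite IH; lia].
Qed.

Lemma compose_list_pow (q : nat -> nat) (m : nat) (z : C) :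
  compose_list (fun j u => u ^ q j)%C m z = (z ^ prod_upto q m)%C.
Proof.
  revert z. induction m as [|m IH]; intros z; [symmetry; apply Cpow_1_r|].
  rewrite compose_list_S, IH, prod_upto_S, Nat.mul_comm, Cpow_mult_r. reflexivity.
Qed.

Lemma NoDup_map_in {A B} (f : A -> B) (l : list A) :
  (forall x y, In x l -> In y l -> f x = f y -> x = y) -> NoDup l -> NoDup (map f l).
Proof.
  induction l as [|a l IH]; simpl; intros Hf Hd; constructor; inversion Hd as [|? ? Ha Hl]; subst.
  - intros Hin. apply in_map_iff in Hin. destruct Hin as [x [Ex Hx]].
    assert (x = a) by (apply Hf; auto). subst. contradiction.
  - apply IH; auto.
Qed.

Lemma prod_upto_perm (p : nat -> nat) (m : nat) (sigma : nat -> nat) : is_perm m sigma ->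
  prod_upto (fun j => p (sigma j)) m = prod_upto p m.
Proof.
  intros [Hrange Hinj].
  assert (Hprod : forall q, prod_upto q m = fold_right Nat.mul 1%nat (map q (seq 0 m))).
  { intros q. unfold prod_upto. induction (seq 0 m); simpl; congruence. }
  rewrite !Hprod, <- map_map.
  assert (Hperm : Permutation (map sigma (seq 0 m)) (seq 0 m)).
  { apply NoDup_Permutation_bis; [| rewrite length_map; lia |].
    - apply NoDup_map_in; [| apply seq_NoDup].
      intros i j Hi Hj. apply in_seq in Hi, Hj. apply Hinj; lia.
    - intros x Hx. apply in_map_iff in Hx. destruct Hx as [i [<- Hi]].
      apply in_seq in Hi. apply in_seq. specialize (Hrange i). lia. }
  induction (Permutation_map p Hperm); simpl; lia.
Qed.

Lemma is_FBP_blaschke_factor_pow (c : C) (k : nat) : in_disk c ->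
  is_FBP k (fun u => blaschke_factor c u ^ k)%C.
Proof.
  intros Hc. exists (RtoC 1), (repeat c k). repeat split.
  - apply Cmod_1.
  - apply repeat_length.
  - apply List.Forall_forall. intros x Hx. apply repeat_spec in Hx. subst x. exact Hc.
  - intros z _. rewrite blaschke_formula_prod, blaschke_prod_repeat. ring.
Qed.

Lemma is_FBP_scal (d : nat) (g : C) (F : C -> C) : Cmod g = 1 -> is_FBP d F ->
  is_FBP d (fun z => g * F z)%C.
Proof.
  intros Hg [g0 [a [Hg0 [Hlen [Ha HF]]]]]. exists (g * g0)%C, a. repeat split; auto.
  - rewrite Cmod_mult, Hg, Hg0. ring.
  - intros z Hz. rewrite HF by exact Hz. unfold blaschke_formula. ring.
Qed.

Lemma is_FBP_comp_blaschke_factor (d : nat) (w : C) (F : C -> C) : in_disk w -> is_FBP d F ->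
  is_FBP d (fun z => blaschke_factor w (F z)).
Proof.
  intros Hw [g [a [Hg [Hlen [Ha HF]]]]].
  destruct (blaschke_factor_comp_formula g w a Hg Hw Ha) as [g' [b [Hg' [Hlb [Hb Hcomp]]]]].
  exists g', b. repeat split; [exact Hg' | congruence | exact Hb |].
  intros z Hz. rewrite HF by exact Hz. apply Hcomp, Hz.
Qed.

(* The innermost factor carries the Blaschke factor [c], the outermost the
   Moebius map and the unimodular constant; all others are pure powers. *)
Lemma blaschke_power_decomposition (q : nat -> nat) (M : nat) (g w c : C) :
  Cmod g = 1 -> in_disk w -> in_disk c ->
  exists Bs : nat -> C -> C,
    (forall j, (j < S M)%nat -> is_FBP (q j) (Bs j)) /\
    forall z, blaschke_factor (- w)%C (g * blaschke_factor c z ^ prod_upto q (S M))%C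
              = compose_list Bs (S M) z.
Proof.
  intros Hg Hw Hc.
  set (P := fun j u => (blaschke_factor (if Nat.eqb j M then c else RtoC 0) u ^ q j)%C).
  assert (HP : forall j, is_FBP (q j) (P j)).
  { intros j. apply is_FBP_blaschke_factor_pow.
    destruct (Nat.eqb j M); [exact Hc | apply in_disk_0]. }
  assert (Hchain : forall z, compose_list P (S M) z = (blaschke_factor c z ^ prod_upto q (S M))%C).
  { intros z. rewrite compose_list_S, prod_upto_S, Nat.mul_comm, Cpow_mult_r, <- compose_list_pow.
    unfold P at 2. rewrite Nat.eqb_refl. apply compose_list_ext. intros j u Hj.
    unfold P. replace (Nat.eqb j M) with false by (symmetry; apply Nat.eqb_neq; lia).
    now rewrite blaschke_factor_0. }
  exists (fun j => if Nat.eqb j 0 then fun u => blaschke_factor (- w)%C (g * P 0%nat u)%C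
                   else P j).
  split.
  - intros [|j] _; simpl; [| apply HP].
    apply is_FBP_comp_blaschke_factor; [apply in_disk_opp, Hw | apply is_FBP_scal, HP; exact Hg].
  - intros z. rewrite <- Hchain, !compose_list_cons. reflexivity.
Qed.

Theorem corollary4p9 (m : nat) (p : nat -> nat) (B : C -> C) :
  (forall i, (i < m)%nat -> (2 <= p i)%nat) ->
  is_FBP (prod_upto p m) B ->
  (exists! w, critical_value B w) ->
  forall sigma : nat -> nat, is_perm m sigma ->
    exists Bs : nat -> C -> C,
      (forall j, (j < m)%nat -> is_FBP (p (sigma j)) (Bs j)) /\
      (forall z, in_disk z -> B z = compose_list Bs m z).
Proof.
  intros _ HB [w [Hw Huniq]] sigma Hsig.
  destruct m as [|M].
  - exfalso. destruct Hw as [_ [z0 [Hz0 [Hcrit _]]]].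
    exact (FBP_1_no_critical_point B z0 HB Hz0 Hcrit).
  - destruct (FBP_unique_critical_value_power _ B w HB Hw (fun w' Hw' => eq_sym (Huniq w' Hw')))
      as [g [c [Hg [Hc HBpow]]]].
    destruct (blaschke_power_decomposition (fun j => p (sigma j)) M g w c Hg (proj1 Hw) Hc)
      as [Bs [HBs Hcomp]].
    exists Bs. split; [exact HBs|].
    intros z Hz. rewrite HBpow, <- (prod_upto_perm p (S M) sigma Hsig) by exact Hz. apply Hcomp.
Qed.
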